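(* There exist constants $c_0 \geq c_1 > 0$ such that for all sufficiently large $N$ there is a non-feasible pair $(N,M)$ for the family of line graphs of acyclic graphs, and the smallest such $M$ satisfies \[\frac{N^2}{2} - c_0N\sqrt{N} \leq M \leq \frac{N^2}{2} - c_1N\sqrt{N}.\]
   Context: All graphs are finite and simple; $L(G)$ denotes the line graph of $G$. For integers $N \ge 1$ and $0\le M\le\binom{N}{2}$, the pair $(N,M)$ is feasible for the family of line graphs of acyclic graphs if there is an acyclic graph (forest) $F$ such that $L(F)$ has exactly $N$ vertices (i.e. $F$ has $N$ edges) and exactly $M$ edges; otherwise it is non-feasible. *)

From mathcomp Require Import all_boot.
Set Implicit Arguments. Unset Strict Implicit. Unset Printing Implicit Defensive.

Definition simple_edges (n : nat) (E : {set {set 'I_n}}) : Prop :=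
  forall e, e \in E -> #|e| = 2.

Definition adj (n : nat) (E : {set {set 'I_n}}) : rel 'I_n :=
  fun x y => [set x; y] \in E.

Definition acyclic (n : nat) (E : {set {set 'I_n}}) : Prop :=
  forall c : seq 'I_n, 3 <= size c -> ~ ucycle (adj E) c.

Definition line_graph_edges (n : nat) (E : {set {set 'I_n}}) : nat :=
  #|[set P : {set {set 'I_n}} |
      (P \subset E) && (#|P| == 2) &&
      [exists e in P, exists f in P, (e != f) && ~~ [disjoint e & f]]]|.

Definition feasible (N M : nat) : Prop :=
  exists (n : nat) (E : {set {set 'I_n}}),
    [/\ simple_edges E, acyclic E, #|E| = N & line_graph_edges E = M].

Definition non_feasible (N M : nat) : Prop :=
  M <= 'C(N, 2) /\ ~ feasible N M.

(* If a forest has degrees d_v, its line graph has sum_v C(d_v, 2) edges;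
   a disjoint union of stars with l_1, ..., l_r edges thus realises
   (sum_i l_i, sum_i C(l_i, 2)).

   Below N^2/2 - 10 N sqrt N every M is realised by two stars of greedily
   chosen sizes s and t, some paths with two edges and isolated edges: the
   greedy choice gives s <~ N - 10 sqrt N, t <~ 2 sqrt N, and fewer than t
   paths are needed for the rest.

   Conversely, let D be the maximum degree of a triangle-free graph with N
   edges, attained at v. Its line graph has at least C(D, 2) and at most
   N (D - 1) edges, and at most C(D, 2) + C(N - D, 2) + (N - D) since an edge
   avoiding v meets at most one edge at v. For k = floor (sqrt N) and
   M = C(N - k + 1, 2) - 1, which is about N^2/2 - N sqrt N / 2, the first
   bound forces D <= N - k, the second D >= k + 2, and the third, convex in
   D, fails on that whole range. *)

From mathcomp Require Import all_boot.
From Stdlib Require Import Reals.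
From mathcomp Require Import zify.
From Stdlib Require Import Lra Psatz.
Set Implicit Arguments. Unset Strict Implicit. Unset Printing Implicit Defensive.

Lemma bin2_double n : 'C(n, 2) * 2 = n * n.-1.
Proof. by elim: n => [|n IH] //; rewrite binS bin1 mulnDl IH; case: n {IH} => //= n; lia. Qed.

Lemma bin2_sq n : 'C(n, 2) * 2 + n = n * n.
Proof. by rewrite bin2_double; case: n => //= n; lia. Qed.

Lemma eq_set2_card2 (T : finType) (e : {set T}) u w :
  #|e| = 2 -> u != w -> u \in e -> w \in e -> e = [set u; w].
Proof.
move=> e2 uw ue we; apply/esym/eqP; rewrite eqEcard cards2 uw e2 andbT.
by apply/subsetP => x /set2P [] ->.
Qed.

Section LineGraph.
Variables (T : finType) (E : {set {set T}}).
Hypothesis E_simple : forall e, e \in E -> #|e| = 2.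

Definition star (v : T) := [set e in E | v \in e].

Definition line_edges := [set P : {set {set T}} |
  (P \subset E) && (#|P| == 2) &&
  [exists e in P, exists f in P, (e != f) && ~~ [disjoint e & f]]].

Lemma edge_eq_of_common2 e f u w : e \in E -> f \in E -> u != w ->
  u \in e -> w \in e -> u \in f -> w \in f -> e = f.
Proof.
move=> eE fE uw ue we uf wf.
by rewrite (eq_set2_card2 (E_simple eE) uw ue we) (eq_set2_card2 (E_simple fE) uw uf wf).
Qed.

Lemma card_common_vertices P : P \in line_edges -> #|[set v | P \subset star v]| = 1.
Proof.
rewrite inE => /andP [/andP [PE /eqP P2]].
case/existsP => e /andP [eP /existsP [f /andP [fP /andP [ef meet_ef]]]].
have eE : e \in E by apply: (subsetP PE).
have fE : f \in E by apply: (subsetP PE).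
have -> : [set v | P \subset star v] = e :&: f.
  rewrite (eq_set2_card2 P2 ef eP fP); apply/setP => v; rewrite !inE.
  apply/subsetP/andP => [sub | [ve vf] x /set2P [] ->]; rewrite ?inE ?eE ?fE //.
  by split; [move: (sub e) | move: (sub f)]; rewrite !inE eqxx ?orbT => /(_ isT) /andP [].
apply/eqP; rewrite eqn_leq card_gt0 setI_eq0 meet_ef andbT.
apply/card_le1P => u /setIP [ue uf] w; rewrite !inE.
apply/andP/eqP => [[we wf] | -> //]; apply/eqP; apply: contraNT ef => wu.
by apply/eqP; apply: (@edge_eq_of_common2 e f w u).
Qed.

Lemma line_edge_of_star v (P : {set {set T}}) : P \subset star v -> #|P| = 2 -> P \in line_edges.
Proof.
move=> Pv P2; have /cards2P [e [f [ef Pef]]] : #|P| == 2 by rewrite P2.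
have /[!inE] /andP [eE ve] : e \in star v by apply: (subsetP Pv); rewrite Pef !inE eqxx.
have /[!inE] /andP [fE vf] : f \in star v by apply: (subsetP Pv); rewrite Pef !inE eqxx orbT.
rewrite P2 eqxx andbT; apply/andP; split.
  by apply/subsetP => x; rewrite Pef => /set2P [] ->.
apply/existsP; exists e; rewrite Pef !inE eqxx /=; apply/existsP; exists f.
rewrite !inE eqxx orbT ef -setI_eq0 /=; apply/set0Pn; exists v.
by rewrite inE ve vf.
Qed.

Lemma card_line_edges : #|line_edges| = \sum_v 'C(#|star v|, 2).
Proof.
rewrite -sum1_card.
transitivity (\sum_(P in line_edges) \sum_(v | P \subset star v) 1).
  by apply: eq_bigr => P LP; rewrite sum_nat_cond_const card_common_vertices.
rewrite (exchange_big_dep predT) //=; apply: eq_bigr => v _.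
rewrite -cards_draws sum_nat_cond_const muln1; apply: eq_card => P; rewrite !inE.
apply/andP/andP => [[/[swap] -> /andP [/andP [_ ->]]] // | [Pv /eqP P2]].
by split=> //; move: (line_edge_of_star Pv P2); rewrite inE.
Qed.

Lemma handshake : \sum_v #|star v| = #|E| * 2.
Proof.
transitivity (\sum_v \sum_(e in E | v \in e) 1).
  apply: eq_bigr => v _; rewrite sum_nat_cond_const muln1.
  by apply: eq_card => e; rewrite !inE.
rewrite (exchange_big_dep (mem E)) /=; last by move=> v e _ /andP [].
rewrite -sum_nat_const; apply: eq_bigr => e eE.
rewrite sum_nat_cond_const muln1 -(E_simple eE).
by apply: eq_card => x; rewrite !inE eE.
Qed.

Lemma bin2_star_le_line_edges v : 'C(#|star v|, 2) <= #|line_edges|.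
Proof. by rewrite card_line_edges (bigD1 v) //= leq_addr. Qed.

Lemma line_edges_le_max_deg D :
  (forall u, #|star u| <= D) -> #|line_edges| <= #|E| * D.-1.
Proof.
move=> leD; rewrite -(leq_pmul2r (isT : 0 < 2)) card_line_edges big_distrl /=.
apply: (@leq_trans (\sum_v #|star v| * D.-1)).
  apply: leq_sum => u _; rewrite bin2_double leq_mul2l -!subn1 leq_sub2r ?orbT //.
by rewrite -big_distrl /= handshake mulnAC.
Qed.

Definition triangle_free := forall a b c, a != b -> b != c -> a != c ->
  [set a; b] \in E -> [set b; c] \in E -> [set a; c] \in E -> False.

Hypothesis E_triangle_free : triangle_free.

Lemma star_meets_uniq v e e' f a b : e \in star v -> e' \in star v ->
  f \in E -> v \notin f -> a \in e -> a \in f -> b \in e' -> b \in f -> e = e'.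
Proof.
move=> /[!inE] /andP [eE ve] /andP [e'E ve'] fE vf ae af be' bf.
have va : v != a by apply: contraNneq vf => ->.
have vb : v != b by apply: contraNneq vf => ->.
have [ab|ab] := eqVneq a b.
  by rewrite -ab in be'; apply: (@edge_eq_of_common2 e e' v a).
exfalso; apply: (@E_triangle_free v a b) => //.
- by rewrite -(eq_set2_card2 (E_simple eE) va ve ae).
- by rewrite -(eq_set2_card2 (E_simple fE) ab af bf).
- by rewrite -(eq_set2_card2 (E_simple e'E) vb ve' be').
Qed.

Section StarSplit.
Variable v : T.

Let outer := E :\: star v.
Let pairs_in (X : {set {set T}}) := [set P : {set {set T}} | P \subset X & #|P| == 2].
Let meet_star (f : {set T}) := odflt f [pick e in star v | ~~ [disjoint e & f]].

Lemma meet_starE e f : e \in star v -> f \in outer -> ~~ [disjoint e & f] ->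
  meet_star f = e.
Proof.
move=> ev /setDP [fE fv] meet_ef; rewrite /meet_star.
case: pickP => [e' /andP [e'v meet_e'f] | /(_ e)]; last by rewrite ev meet_ef.
have vf : v \notin f by apply: contra fv => vf; rewrite inE fE.
move: meet_ef meet_e'f; rewrite -!setI_eq0.
case/set0Pn => a /setIP [ae af] /set0Pn [b /setIP [be' bf]].
by apply/esym/(@star_meets_uniq v e e' f a b).
Qed.

Lemma line_edges_split : line_edges \subset
  pairs_in (star v) :|: pairs_in outer :|: [set [set meet_star f; f] | f in outer].
Proof.
apply/subsetP => P /[!inE] /andP [/andP [PE /eqP P2]].
case/existsP => e /andP [eP /existsP [f /andP [fP /andP [ef meet_ef]]]].
have Pef := eq_set2_card2 P2 ef eP fP.
have eE : e \in E by apply: (subsetP PE).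
have fE : f \in E by apply: (subsetP PE).
rewrite P2 eqxx !andbT Pef.
have [ev|ev] := boolP (e \in star v); have [fv|fv] := boolP (f \in star v).
- by rewrite subUset !sub1set ev fv.
- have fo : f \in outer by rewrite inE fv fE.
  by apply/orP; right; apply/imsetP; exists f; rewrite // (meet_starE ev).
- have eo : e \in outer by rewrite inE ev eE.
  apply/orP; right; apply/imsetP; exists e; rewrite // setUC (meet_starE fv) //.
  by rewrite disjoint_sym.
- have eo : e \in outer by rewrite inE ev eE.
  have fo : f \in outer by rewrite inE fv fE.
  by rewrite !subUset !sub1set eo fo !orbT.
Qed.

Lemma line_edges_le_star_split :
  #|line_edges| <= 'C(#|star v|, 2) + 'C(#|E| - #|star v|, 2) + (#|E| - #|star v|).
Proof.
have star_sub : star v \subset E by apply/subsetP => e /[!inE] /andP [].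
have card_outer : #|outer| = #|E| - #|star v| by rewrite cardsD (setIidPr star_sub).
apply: (leq_trans (subset_leq_card line_edges_split)).
apply: (leq_trans (leq_card_setU _ _)); rewrite -card_outer.
apply: leq_add; last exact: leq_imset_card.
by apply: (leq_trans (leq_card_setU _ _)); rewrite !cards_draws.
Qed.

End StarSplit.
End LineGraph.

Definition graph_adj (T : finType) (E : {set {set T}}) : rel T :=
  fun x y => [set x; y] \in E.

Definition graph_acyclic (T : finType) (E : {set {set T}}) : Prop :=
  forall c : seq T, 3 <= size c -> ~ ucycle (graph_adj E) c.

Lemma acyclic_triangle_free (T : finType) (E : {set {set T}}) :
  graph_acyclic E -> triangle_free E.
Proof.
move=> acycE a b c ab bc ac Eab Ebc Eac; apply: (acycE [:: a; b; c]) => //.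
by rewrite /ucycle /= /graph_adj Eab Ebc setUC Eac /= !inE negb_or ab ac bc.
Qed.

(* An idempotent map p encodes a disjoint union of stars: each x with
   p x != x is a leaf joined to the centre p x. *)
Section StarForest.
Variables (T : finType) (p : T -> T).
Hypothesis p_idem : forall x, p (p x) = p x.

Definition leaves := [set x | p x != x].
Definition star_edges := [set [set x; p x] | x in leaves].
Definition fibre c := [set x | (p x == c) && (x != c)].

Lemma star_edges_simple e : e \in star_edges -> #|e| = 2.
Proof. by case/imsetP => x /[!inE] xL ->; rewrite cards2 eq_sym xL. Qed.

Lemma image_notin_leaves x : p x \notin leaves.
Proof. by rewrite inE p_idem eqxx. Qed.

Lemma star_edges_adj a b : [set a; b] \in star_edges ->
  (a \in leaves /\ b = p a) \/ (b \in leaves /\ a = p b).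
Proof.
move=> Eab; have /imsetP [x xL eq_ab] := Eab.
have ab : a != b by have := star_edges_simple Eab; rewrite cards2; case: (a != b).
have bx : b \in [set x; p x] by rewrite -eq_ab !inE eqxx orbT.
have ax : a \in [set x; p x] by rewrite -eq_ab !inE eqxx.
case/set2P: ax ab => -> xb.
- by case/set2P: bx xb => ->; rewrite ?eqxx //; left.
- by case/set2P: bx xb => ->; rewrite ?eqxx //; right.
Qed.

Lemma card_star_edges : #|star_edges| = #|leaves|.
Proof.
apply: card_in_imset => x y xL /[!inE] py_y eq_xy.
have /set2P [] // : x \in [set y; p y] by rewrite -eq_xy !inE eqxx.
by move=> x_py; move: xL; rewrite inE x_py p_idem eqxx.
Qed.

Lemma star_edges_cycle_mid x y z r :
  ucycle (graph_adj star_edges) [:: x, y, z & r] -> y \notin leaves.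
Proof.
case/andP => /= /andP [adj_xy /andP [adj_yz _]] /andP [xn _].
have xz : x != z by apply: contra xn => /eqP ->; rewrite !inE eqxx orbT.
apply/negP => yL.
have x_py : x = p y.
  case: (star_edges_adj adj_xy) => [[_ y_px] | [_ //]].
  by rewrite y_px (negbTE (image_notin_leaves _)) in yL.
have z_py : z = p y.
  case: (star_edges_adj adj_yz) => [[_ //] | [_ y_pz]].
  by rewrite y_pz (negbTE (image_notin_leaves _)) in yL.
by rewrite x_py z_py eqxx in xz.
Qed.

Lemma star_edges_acyclic : graph_acyclic star_edges.
Proof.
move=> [|x [|y [|z r]]] //= _ cyc.
have yL := star_edges_cycle_mid cyc.
have zL : z \notin leaves.
  move: cyc; rewrite -(rot_ucycle 1) rot1_cons /=.
  by case: r => [|w r] /star_edges_cycle_mid.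
case/andP: cyc => /= /andP [_ /andP [adj_yz _]] _.
by case: (star_edges_adj adj_yz) => [[L _] | [L _]]; rewrite L in yL zL.
Qed.

Lemma card_star_root v : p v = v -> #|star star_edges v| = #|fibre v|.
Proof.
move=> pv_v.
have -> : star star_edges v = [set [set x; v] | x in fibre v].
  apply/setP => e; rewrite !inE; apply/andP/imsetP => [[/imsetP [x xL ->]] | [x]].
    rewrite inE in xL; case/set2P => [vx | ->]; first by rewrite -vx pv_v eqxx in xL.
    by exists x; rewrite // inE eqxx eq_sym.
  rewrite inE => /andP [/eqP <- xv] ->; split; last by rewrite !inE eqxx orbT.
  by apply: imset_f; rewrite inE eq_sym.
apply: card_in_imset => x y /[!inE] /andP [_ xv] /andP [_ yv] eq_xy.
have /set2P [] // : x \in [set y; v] by rewrite -eq_xy !inE eqxx.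
by move=> x_v; rewrite x_v eqxx in xv.
Qed.

Lemma star_leaf_small v : v \in leaves -> #|star star_edges v| <= 1.
Proof.
rewrite inE => pv_v; apply: (@leq_trans #|[set [set v; p v]]|); last by rewrite cards1.
apply/subset_leq_card/subsetP => e /[!inE] /andP [/imsetP [x xL ->]].
case/set2P => [-> // | v_px]; by rewrite v_px p_idem eqxx in pv_v.
Qed.

Lemma fibre_leaf v : v \in leaves -> fibre v = set0.
Proof.
rewrite inE => pv_v; apply/setP => x; rewrite !inE.
by apply/negP => /andP [/eqP px_v _]; rewrite -px_v p_idem eqxx in pv_v.
Qed.

Lemma bin2_star_star_edges v : 'C(#|star star_edges v|, 2) = 'C(#|fibre v|, 2).
Proof.
have [pv_v | pv_v] := eqVneq (p v) v; first by rewrite card_star_root.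
have vL : v \in leaves by rewrite inE pv_v.
by rewrite fibre_leaf // cards0 !bin_small // ltnS star_leaf_small.
Qed.

Lemma card_leaves : #|leaves| = \sum_v #|fibre v|.
Proof.
rewrite -sum1_card (partition_big p predT) //=; apply: eq_bigr => v _.
rewrite sum_nat_cond_const muln1; apply: eq_card => x; rewrite !inE.
apply/andP/andP => [[px_x /eqP <-] | [/eqP px_v xv]]; first by rewrite eqxx eq_sym.
by rewrite px_v eq_sym xv.
Qed.

Lemma card_line_star_edges : #|line_edges star_edges| = \sum_v 'C(#|fibre v|, 2).
Proof.
rewrite card_line_edges; last exact: star_edges_simple.
by apply: eq_bigr => v _; apply: bin2_star_star_edges.
Qed.

End StarForest.

Section Relabel.
Variables (T : finType) (p : T -> T).
Hypothesis p_idem : forall x, p (p x) = p x.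

Definition relabel (x : 'I_#|T|) : 'I_#|T| := enum_rank (p (enum_val x)).

Lemma relabel_idem x : relabel (relabel x) = relabel x.
Proof. by rewrite /relabel enum_rankK p_idem. Qed.

Lemma card_fibre_relabel c : #|fibre relabel c| = #|fibre p (enum_val c)|.
Proof.
rewrite -(card_imset (fibre relabel c) enum_val_inj); apply: eq_card => y.
apply/imsetP/idP => [[x /[!inE] fx ->] | /[!inE] /andP [/eqP py_c yc]].
  by move: fx; rewrite /relabel -!(inj_eq enum_val_inj) enum_rankK.
exists (enum_rank y); last by rewrite enum_rankK.
by rewrite inE /relabel enum_rankK py_c enum_valK eqxx -(inj_eq enum_val_inj) enum_rankK.
Qed.

Lemma sum_fibre_relabel (F : nat -> nat) :
  \sum_(c : 'I_#|T|) F #|fibre relabel c| = \sum_(c : T) F #|fibre p c|.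
Proof.
rewrite [RHS](reindex (fun x : 'I_#|T| => enum_val x)) /=; last first.
  by exists enum_rank => y _; rewrite ?enum_valK ?enum_rankK.
by apply: eq_bigr => c _; rewrite card_fibre_relabel.
Qed.

End Relabel.

Lemma feasible_star_forest (T : finType) (p : T -> T) : (forall x, p (p x) = p x) ->
  feasible (\sum_c #|fibre p c|) (\sum_c 'C(#|fibre p c|, 2)).
Proof.
move=> p_idem; have relabel_p_idem := relabel_idem p_idem.
exists #|T|, (star_edges (relabel p)); split.
- exact: star_edges_simple.
- exact: star_edges_acyclic.
- by rewrite card_star_edges // card_leaves // (sum_fibre_relabel p (fun n => n)).
- rewrite /line_graph_edges -/(line_edges _) card_line_star_edges //.
  exact: (sum_fibre_relabel p (fun n => 'C(n, 2))).
Qed.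

Lemma card_ord_lt K a : a <= K -> #|[set j : 'I_K | j < a]| = a.
Proof.
move=> aK; have widen_inj : injective (widen_ord aK) by move=> x y /(congr1 val) /= /val_inj.
rewrite -[a in RHS]card_ord -(card_imset _ widen_inj); apply: eq_card => j.
rewrite !inE; apply/idP/imsetP => [ja | [x _ ->] //=].
by exists (Ordinal ja) => //; apply: val_inj.
Qed.

Lemma nth_le_sumn (l : seq nat) i : nth 0 l i <= sumn l.
Proof.
by elim: l i => [|a l IH] [|i] //=; [rewrite leq_addr | rewrite (leq_trans (IH i)) ?leq_addl].
Qed.

Section Stars.
Variable l : seq nat.

(* Star i has centre (i, None) and leaves (i, Some j) for j < nth 0 l i;
   the other vertices are isolated. *)
Definition stars_vertex := ('I_(size l) * option 'I_(sumn l))%type.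

Definition stars_parent (v : stars_vertex) : stars_vertex :=
  if v is (i, Some j) then if j < nth 0 l i then (i, None) else v else v.

Lemma stars_parent_idem v : stars_parent (stars_parent v) = stars_parent v.
Proof. by case: v => i [j|] //=; case: ifP => //= ->. Qed.

Lemma card_fibre_centre i : #|fibre stars_parent (i, None)| = nth 0 l i.
Proof.
have leaf_inj : injective (fun j : 'I_(sumn l) => ((i, Some j) : stars_vertex)).
  by move=> x y [].
rewrite -(card_ord_lt (nth_le_sumn l i)) -(card_imset _ leaf_inj).
apply: eq_card => -[i' [j|]]; rewrite !inE /=; last first.
  by rewrite andbN; apply/esym/imsetP => -[].
case: ifP => jl; apply/idP/imsetP.
- by case/andP => /eqP [<-] _; exists j; rewrite ?inE.
- by case=> j' _ [-> ->]; rewrite eqxx xpair_eqE eqxx.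
- by rewrite xpair_eqE andbF.
- by case=> j' /[!inE] jl' [ii' jj']; move: jl; rewrite ii' jj' jl'.
Qed.

Lemma card_fibre_leaf i j : #|fibre stars_parent (i, Some j)| = 0.
Proof.
apply/eqP; rewrite cards_eq0; apply/eqP/setP => -[i' [j'|]]; rewrite !inE /=.
  by case: ifP => _; [rewrite xpair_eqE andbF | case: eqP].
by rewrite xpair_eqE andbF.
Qed.

Lemma sum_fibre_stars (F : nat -> nat) : F 0 = 0 ->
  \sum_v F #|fibre stars_parent v| = sumn [seq F x | x <- l].
Proof.
move=> F0; rewrite -(pair_bigA _ (fun i o => F #|fibre stars_parent (i, o)|)) /=.
rewrite [sumn [seq _ | _ <- _]]sumnE big_map (big_nth 0) big_mkord.
apply: eq_bigr => i _; rewrite (bigD1 None) //= card_fibre_centre big1 ?addn0 //.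
by case=> [j|] //= _; rewrite card_fibre_leaf.
Qed.

Lemma feasible_stars : feasible (sumn l) (sumn [seq 'C(x, 2) | x <- l]).
Proof.
have := feasible_star_forest stars_parent_idem.
by rewrite (@sum_fibre_stars (fun n => n)) // (@sum_fibre_stars (fun n => 'C(n, 2))) // map_id.
Qed.

End Stars.

Lemma feasible_two_stars_paths N M s t q :
  'C(s, 2) + 'C(t, 2) + q = M -> s + t + 2 * q <= N -> feasible N M.
Proof.
move=> defM leN.
have := feasible_stars ([:: s; t] ++ nseq q 2 ++ nseq (N - (s + t + 2 * q)) 1).
rewrite !map_cat !sumn_cat !map_nseq !sumn_nseq /= binn (@bin_small 1 2) //.
have -> : s + (t + 0) + (2 * q + 1 * (N - (s + t + 2 * q))) = N by lia.
by rewrite -defM mul1n mul0n !addn0.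
Qed.

Lemma feasible_max_degree_bounds N M : feasible N M -> 0 < N -> exists D,
  [/\ D <= N, 'C(D, 2) <= M, M <= 'C(D, 2) + 'C(N - D, 2) + (N - D) & M <= N * D.-1].
Proof.
move=> [n [E [E_simple E_acyclic <- <-]]] N_gt0.
have [e eE] : exists e, e \in E by apply/card_gt0P.
have [x0 _] : exists x, x \in e by apply/card_gt0P; rewrite (E_simple _ eE).
have [v _ v_max] := @arg_maxnP _ x0 predT (fun u => #|star E u|) isT.
exists #|star E v|; split.
- by apply/subset_leq_card/subsetP => f /[!inE] /andP [].
- exact: bin2_star_le_line_edges.
- exact/line_edges_le_star_split/acyclic_triangle_free.
- by apply: line_edges_le_max_deg => // u; apply: v_max.
Qed.

Lemma bin2S_double P M : M.+1 = 'C(P.+1, 2) -> M.*2 + 2 = P * P + P.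
Proof. by rewrite binS bin1 -mul2n; have := bin2_sq P; lia. Qed.

Lemma bin2_lt_leq D P : 'C(D, 2) < 'C(P.+1, 2) -> D <= P.
Proof. by apply: contraLR; rewrite -!ltnNge => /(@leq_bin2l _ _ 2). Qed.

Section Gap.
Variables k P M : nat.
Hypothesis k_ge10 : 10 <= k.
Hypothesis kP : k * k <= P + k.
Hypothesis defM : M.+1 = 'C(P.+1, 2).

Lemma gap_ge9k : 9 * k <= P.
Proof. have : 10 * k <= k * k by apply: leq_mul. lia. Qed.

Lemma gap_max_degree_gt D : M <= (P + k) * D.-1 -> k + 1 < D.
Proof.
move=> MD; rewrite ltnNge; apply/negP => Dk.
have MPk : M <= P * k + k * k.
  by rewrite (leq_trans MD) // -mulnDl leq_mul //; lia.
have := bin2S_double defM; have := leq_mul (leqnn P) gap_ge9k.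
have := leq_mul (leqnn k) gap_ge9k; have := gap_ge9k.
clear -MPk k_ge10; lia.
Qed.

Lemma gap_max_degree_mid D : k + 1 < D -> D <= P ->
  M <= 'C(D, 2) + 'C(P + k - D, 2) + (P + k - D) -> False.
Proof.
move=> kD DP MD.
have [G defP] : exists G, P = D + G by exists (P - D); lia.
have k2_lt : k * k + 3 * k + 2 < 2 * (D + G + k).
  have : 10 * k <= k * k by apply: leq_mul.
  lia.
have twoM := bin2S_double defM; rewrite defP in twoM.
have twoM_le : M.*2 + D <= D * D + (G + k) * (G + k) + (G + k).
  have eGk : P + k - D = G + k by lia.
  rewrite eGk in MD; have := bin2_sq D; have := bin2_sq (G + k); lia.
clear -kD k2_lt twoM twoM_le; nia.
Qed.

Lemma gap_not_feasible : ~ feasible (P + k) M.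
Proof.
move=> /feasible_max_degree_bounds [|D [_ lowD upD crudeD]]; first lia.
have DP : D <= P by apply: bin2_lt_leq; rewrite -defM ltnS.
exact: gap_max_degree_mid (gap_max_degree_gt crudeD) DP upD.
Qed.

End Gap.

Lemma ex_crossing (f : nat -> nat) M n :
  f 0 <= M -> M < f n -> exists2 s, f s <= M & M < f s.+1.
Proof.
move=> f0M; elim: n => [|n IH] Mn; first by rewrite ltnNge f0M in Mn.
by have [/IH | fnM] := ltnP M (f n); last exists n.
Qed.

Lemma ex_isqrt N : exists2 k, k * k <= N & N < k.+1 * k.+1.
Proof. by apply: (@ex_crossing (fun k => k * k) N N.+1) => //; nia. Qed.

Lemma ex_bin2_floor M : exists2 s, 'C(s, 2) <= M & M < 'C(s, 2) + s.
Proof.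
have ltM : M < 'C(M.+2, 2) by rewrite binS bin1 ltn_addl.
have [//|s lesM ltMs] := @ex_crossing (fun s => 'C(s, 2)) M M.+2 _ ltM.
by exists s; rewrite // -[s in _ + s]bin1 -binS.
Qed.

Lemma isqrt_ge10 N k : 100 <= N -> N < k.+1 * k.+1 -> 10 <= k.
Proof.
move=> N100 Nk; rewrite leqNgt; apply/negP => k9.
have : k.+1 * k.+1 <= 10 * 10 by apply: leq_mul.
lia.
Qed.

Lemma gap_non_feasible N k : 100 <= N -> k * k <= N -> N < k.+1 * k.+1 ->
  non_feasible N ('C((N - k).+1, 2) - 1).
Proof.
move=> N100 kN Nk; have k10 := isqrt_ge10 N100 Nk.
have P_pos : 0 < 'C((N - k).+1, 2) by rewrite bin_gt0; nia.
split; first by rewrite (leq_trans (leq_subr 1 _)) // leq_bin2l //; lia.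
have kN' : k <= N by nia.
rewrite -[N in feasible N _](subnK kN').
by apply: gap_not_feasible; rewrite ?subnK ?subn1 ?prednK.
Qed.

Lemma sqrt_INR_ge10 N : 100 <= N ->
  (10 <= sqrt (INR N))%R /\ (sqrt (INR N) * sqrt (INR N) = INR N)%R.
Proof.
move=> /leP /le_INR; rewrite [INR 100]INR_IZR_INZ [Z.of_nat _]/= => N100.
have xx := sqrt_sqrt _ (pos_INR N); have := sqrt_pos (INR N).
by split => //; nra.
Qed.

Lemma greedy_stars_bound (s t m n x : R) : (0 <= s)%R -> (0 <= t)%R ->
  (x * x = n)%R -> (10 <= x)%R -> (s * s <= m + m + s)%R -> (t * t < s + s + t)%R ->
  (m < n ^ 2 / 2 - 10 * n * x)%R -> (s + 3 * t <= n)%R.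
Proof.
move=> s0 t0 xx x10 hs ht hm.
have n_ge : (0 <= n - 10 * x)%R by nra.
have s_lt : (s < n - 10 * x + 2)%R.
  apply: Rnot_le_lt => s_ge.
  have : (0 <= (s - (n - 10 * x + 2)) * (s + (n - 10 * x + 2) - 1))%R by nra.
  nra.
have t_lt : (t < 2 * x + 1)%R.
  apply: Rnot_le_lt => t_ge.
  have : (4 * x * x <= (t - 1) * (t - 1))%R by nra.
  nra.
lra.
Qed.

Lemma feasible_below N M : 100 <= N ->
  (INR M < INR N ^ 2 / 2 - 10 * INR N * sqrt (INR N))%R -> feasible N M.
Proof.
move=> N100 M_lt.
have [s le_s lt_s] := ex_bin2_floor M.
have [t le_t lt_t] := ex_bin2_floor (M - 'C(s, 2)).
apply: (@feasible_two_stars_paths N M s t (M - 'C(s, 2) - 'C(t, 2))); first lia.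
suff : s + 3 * t <= N by lia.
have s_sq : s * s <= M + M + s by have := bin2_sq s; lia.
have t_sq : (t * t).+1 <= s + s + t by have := bin2_sq t; lia.
have [x10 xx] := sqrt_INR_ge10 N100.
move/leP/le_INR: s_sq; move/leP/le_INR: t_sq.
rewrite S_INR !plus_INR !mult_INR => t_sq s_sq.
have := greedy_stars_bound (pos_INR s) (pos_INR t) xx x10 s_sq ltac:(lra) M_lt.
by move=> fit; apply/leP/INR_le; rewrite plus_INR mult_INR [INR 3]/=; lra.
Qed.

Lemma gap_bound_real (m p k n x : R) : (0 <= p)%R -> (x * x = n)%R -> (10 <= x)%R ->
  (n = p + k)%R -> (n < (k + 1) * (k + 1))%R -> (0 <= k)%R ->
  (m * 2 + 2 = p * p + p)%R -> (m <= n ^ 2 / 2 - 1 / 2 * n * x)%R.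
Proof.
move=> p0 xx x10 np nk k0 hm.
have x_lt : (x < k + 1)%R by nra.
have : (p * p <= (n - x + 1) * (n - x + 1))%R by nra.
nra.
Qed.

Lemma gap_upper_bound N k : 100 <= N -> k * k <= N -> N < k.+1 * k.+1 ->
  (INR ('C((N - k).+1, 2) - 1) <= INR N ^ 2 / 2 - 1 / 2 * INR N * sqrt (INR N))%R.
Proof.
move=> N100 kN Nk; have k10 := isqrt_ge10 N100 Nk.
have [x10 xx] := sqrt_INR_ge10 N100.
have P_pos : 0 < 'C((N - k).+1, 2) by rewrite bin_gt0; nia.
rewrite subn1; have /(congr1 INR) := bin2S_double (prednK P_pos).
rewrite -addnn !plus_INR mult_INR [INR 2]/= => twoM.
apply: (gap_bound_real (pos_INR (N - k)) xx x10 _ _ (pos_INR k)); last lra.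
- by rewrite -plus_INR; f_equal; nia.
- by move/ltP/lt_INR: Nk; rewrite mult_INR S_INR.
Qed.

Theorem mainTheorem5 :
  exists c0 c1 : R, (c0 >= c1)%R /\ (c1 > 0)%R /\
    exists N0 : nat, forall N : nat, N0 <= N ->
      (exists M : nat, non_feasible N M) /\
      (forall M : nat, non_feasible N M ->
         (forall M' : nat, M' < M -> ~ non_feasible N M') ->
         (INR N ^ 2 / 2 - c0 * INR N * sqrt (INR N) <= INR M)%R /\
         (INR M <= INR N ^ 2 / 2 - c1 * INR N * sqrt (INR N))%R).
Proof.
exists 10%R, (1 / 2)%R; split; [lra | split; [lra | exists 100 => N N100]].
have [k kN Nk] := ex_isqrt N.
have gap_nf := gap_non_feasible N100 kN Nk.
split; first by eexists; exact: gap_nf.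
move=> M [_ M_nf] M_min; split.
- by apply: Rnot_lt_le => M_lt; apply/M_nf/feasible_below.
- apply: Rle_trans (gap_upper_bound N100 kN Nk); apply/le_INR/leP.
  by rewrite leqNgt; apply/negP => lt_gap; apply: M_min lt_gap gap_nf.
Qed.
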